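(* Let $\mathbf{D}\in\mathbb{R}^{d\times n}$ be arbitrary, $1\le s\le n$, $\gamma>0$, and $\mathbf{g}\sim N(\mathbf{0},\mathbf{I}_d)$. Then \[ w(\mathbf{D}S_\gamma)\ \le\ \mathbb{E}\min_{\mathbf{z}\in K_{\gamma,s}^*}\big\|(\mathbf{D}^\top\mathbf{g})^*+\mathbf{z}\big\|_2. \]
   Context: $S_\gamma:=\{\mathbf{x}\in\mathbb{R}^n:\|\mathbf{x}\|_2=1,\ \|\mathbf{x}_T\|_1\ge\gamma\|\mathbf{x}_{T^c}\|_1\text{ for some }T\subset[n],|T|\le s\}$, where $\mathbf{x}_T$ agrees with $\mathbf{x}$ on $T$ and is $0$ elsewhere. $\mathbf{D}S_\gamma=\{\mathbf{D}\mathbf{x}:\mathbf{x}\in S_\gamma\}$ and $w(T)=\mathbb{E}\sup_{\mathbf{x}\in T}\langle\mathbf{g},\mathbf{x}\rangle$ is the Gaussian width. $K_{\gamma,s}:=\{\mathbf{u}\in\mathbb{R}^n: u_\ell\ge0\ \forall\ell,\ \sum_{\ell=1}^s u_\ell\ge\gamma\sum_{\ell=s+1}^n u_\ell\}$ and $K_{\gamma,s}^*:=\{\mathbf{z}\in\mathbb{R}^n:\langle\mathbf{z},\mathbf{u}\rangle\ge0\ \forall\mathbf{u}\in K_{\gamma,s}\}$ is its dual cone. For $\mathbf{x}\in\mathbb{R}^n$, the nonincreasing rearrangement $\mathbf{x}^*$ satisfies $x_1^*\ge\dots\ge x_n^*\ge0$ with $x_i^*=|x_{\pi(i)}|$ for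 some permutation $\pi$. *)

From HB Require Import structures.
From mathcomp Require Import all_boot all_order all_algebra.
From mathcomp Require Import all_classical all_reals all_analysis.
Set Implicit Arguments. Unset Strict Implicit. Unset Printing Implicit Defensive.
Import Order.TTheory GRing.Theory Num.Theory.
Local Open Scope classical_set_scope.
Local Open Scope ring_scope.

Section defs.
Context {R : realType}.

Definition dotv (n : nat) (a b : 'cV[R]_n) : R := \sum_(i < n) a i 0 * b i 0.
Definition l1norm (n : nat) (x : 'cV[R]_n) : R := \sum_(i < n) `|x i 0|.
Definition l2norm (n : nat) (x : 'cV[R]_n) : R := Num.sqrt (\sum_(i < n) x i 0 ^+ 2).

Definition restr (n : nat) (T : {set 'I_n}) (x : 'cV[R]_n) : 'cV[R]_n :=
  \col_i (if i \in T then x i 0 else 0).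

Definition S_gamma (n s : nat) (gamma : R) : set 'cV[R]_n :=
  [set x | l2norm x = 1 /\
     exists T : {set 'I_n}, (#|T| <= s)%N /\
       gamma * l1norm (restr (~: T) x) <= l1norm (restr T x)].

(* K_{gamma,s}; coordinates l = 1..s are the indices i < s (0-based) *)
Definition K_cone (n s : nat) (gamma : R) : set 'cV[R]_n :=
  [set u | (forall i, 0 <= u i 0) /\
     gamma * (\sum_(i < n | (s <= i)%N) u i 0) <= \sum_(i < n | (i < s)%N) u i 0].

Definition dual_cone (n : nat) (K : set 'cV[R]_n) : set 'cV[R]_n :=
  [set z | forall u, K u -> 0 <= dotv z u].

Definition rearr (n : nat) (x : 'cV[R]_n) : 'cV[R]_n :=
  \col_i nth 0 (sort (fun a b : R => b <= a) [seq `|x j 0| | j <- enum 'I_n]) i.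

(* Expectation of a [0,+oo]-valued function of g ~ N(0, I_d), written as an
   iterated integral against the one-dimensional standard normal law
   (coordinates of g are independent N(0,1)). *)
Fixpoint gauss_exp (d : nat) : ('cV[R]_d -> \bar R) -> \bar R :=
  match d return ('cV[R]_d -> \bar R) -> \bar R with
  | 0 => fun f => f 0
  | d'.+1 => fun f =>
      (\int[normal_prob 0 1]_t gauss_exp (fun v : 'cV[R]_d' =>
          f (col_mx (const_mx t : 'cV[R]_1) v)))%E
  end.

Definition gwidth (d : nat) (T : set 'cV[R]_d) : \bar R :=
  gauss_exp (fun g => ereal_sup [set (dotv g y)%:E | y in T]).

End defs.

From HB Require Import structures.
From mathcomp Require Import all_boot all_order all_algebra.
From mathcomp Require Import all_classical all_reals all_analysis.
From mathcomp Require Import ring lra.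
Set Implicit Arguments. Unset Strict Implicit. Unset Printing Implicit Defensive.
Import Order.TTheory GRing.Theory Num.Theory.
Local Open Scope classical_set_scope.
Local Open Scope ring_scope.

(* For fixed [g], [x] in [S_gamma] and [z] in the dual cone of [K_{gamma,s}],
     <g, D x> = <D^T g, x> <= <(D^T g)^*, x^*> <= <(D^T g)^* + z, x^*>
              <= ||(D^T g)^* + z||_2 ||x^*||_2 = ||(D^T g)^* + z||_2.
   The first inequality is the rearrangement inequality, the second holds
   because [x^*] lies in [K_{gamma,s}] (the [s] largest entries of [|x|]
   dominate [|x_T|] whenever [|T| <= s]), and the last is Cauchy-Schwarz.
   Taking the supremum over [x], the infimum over [z], and then the (monotone)
   Gaussian expectation gives the bound. *)

(* The integral is defined by suprema over simple functions. *)
Lemma le_integral_pointwise (R : realType) (dT : measure_display)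
    (T : measurableType dT) (mu : {measure set T -> \bar R})
    (D : set T) (f g : T -> \bar R) :
  (forall x, D x -> f x <= g x)%E ->
  (\int[mu]_(x in D) f x <= \int[mu]_(x in D) g x)%E.
Proof.
move=> fg; have fgD : {in [set: T], forall x, (f \_ D) x <= (g \_ D) x}%E.
  by move=> x _; rewrite /patch; case: ifPn => // /set_mem /fg.
rewrite /integral; apply: leeB; apply: ereal_sup_le;
  move=> _ [h /= hf <-]; exists h => //= x; apply: (le_trans (hf x)).
- exact: (funepos_le fgD (in_setT x)).
- exact: (funeneg_le fgD (in_setT x)).
Qed.

Lemma le_gauss_exp (R : realType) (d : nat) (f g : 'cV[R]_d -> \bar R) :
  (forall x, f x <= g x)%E -> (gauss_exp f <= gauss_exp g)%E.
Proof.
elim: d f g => [|d IH] f g fg /=; first exact: fg.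
by apply: le_integral_pointwise => t _; apply: IH => v; exact: fg.
Qed.

Section rearrangement.
Variable R : realDomainType.
Local Notation ger := (fun a b : R => b <= a).

Lemma ger_trans : transitive ger.
Proof. by move=> y x z /= yx zy; apply: le_trans zy yx. Qed.

Lemma ger_anti : antisymmetric ger.
Proof. by move=> x y /andP[xy yx]; apply/eqP; rewrite eq_le xy yx. Qed.

Lemma ger_total : total ger.
Proof. by move=> x y; rewrite orbC le_total. Qed.

Lemma sort_ger_cons (s t : seq R) (m : R) :
  perm_eq s (m :: t) -> all (fun y => y <= m) t -> sort ger s = m :: sort ger t.
Proof.
move=> st tm; apply: (sorted_eq ger_trans ger_anti); first exact: (sort_sorted ger_total).
  by rewrite /= (path_sortedE ger_trans) all_sort tm (sort_sorted ger_total).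
by rewrite perm_sort (perm_trans st) // perm_cons perm_sym perm_sort.
Qed.

Lemma sort_ger_head (s t : seq R) (m : R) :
  sort ger s = m :: t -> m \in s /\ all (fun y => y <= m) s.
Proof.
move=> sm; split; first by rewrite -(mem_sort ger) sm mem_head.
have := sort_sorted ger_total s; rewrite sm /= (path_sortedE ger_trans) => /andP[tm _].
by rewrite -(all_sort _ ger) sm /= lexx.
Qed.

Local Notation dot r := (\sum_(p <- r) p.1 * p.2).

(* Swapping second coordinates so that the largest first coordinate meets the
   largest second one does not decrease the sum: (A - a)(B - b) >= 0. *)
Lemma sum_mul_swap_max (r : seq (R * R)) (A B : R) :
  A \in map fst r -> B \in map snd r ->
  all (fun a => a <= A) (map fst r) -> all (fun b => b <= B) (map snd r) ->
  exists r', [/\ perm_eq (map fst r) (A :: map fst r'),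
                 perm_eq (map snd r) (B :: map snd r') &
                 dot r <= A * B + dot r'].
Proof.
move=> /mapP[p pr ->] /mapP[q qr ->] /allP Amax /allP Bmax.
have r_p := perm_to_rem pr; rewrite (perm_big _ r_p) big_cons.
have [p2q2|p2q2] := eqVneq p.2 q.2.
  exists (rem p r); split; [exact: (perm_map fst r_p) | | by rewrite p2q2].
  by rewrite -p2q2; exact: (perm_map snd r_p).
have qrp : q \in rem p r.
  move: qr; rewrite (perm_mem r_p) in_cons => /orP[/eqP qp|//].
  by rewrite qp eqxx in p2q2.
have rp_q := perm_to_rem qrp; set r2 := rem q (rem p r) in rp_q.
exists ((q.1, p.2) :: r2); split.
- apply: perm_trans (perm_map fst r_p) _; rewrite /= perm_cons.
  exact: (perm_map fst rp_q).
- apply: perm_trans (perm_map snd r_p) _; rewrite perm_sym /=.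
  rewrite (perm_catCA [:: q.2] [:: p.2]) /= perm_cons perm_sym.
  exact: (perm_map snd rp_q).
- rewrite (perm_big _ rp_q) !big_cons /=.
  have qA : q.1 <= p.1 by apply: Amax; rewrite map_f.
  have pB : p.2 <= q.2 by apply: Bmax; rewrite map_f.
  have : 0 <= (p.1 - q.1) * (q.2 - p.2) by rewrite mulr_ge0 // subr_ge0.
  nra.
Qed.

Lemma sum_mul_le_zip_sort (r : seq (R * R)) :
  dot r <= dot (zip (sort ger (map fst r)) (sort ger (map snd r))).
Proof.
have [k] := ubnP (size r); elim: k r => // k IH r.
case Ea: (sort ger (map fst r)) => [|A sa].
  move: (size_sort ger (map fst r)); rewrite Ea size_map => /esym/size0nil-> _.
  by rewrite !big_nil.
case Eb: (sort ger (map snd r)) => [|B sb].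
  by move: (size_sort ger (map snd r)) (size_sort ger (map fst r));
    rewrite Ea Eb !size_map => <-.
have [Ar Amax] := sort_ger_head Ea; have [Br Bmax] := sort_ger_head Eb.
have [r' [fr' sr' le_r']] := sum_mul_swap_max Ar Br Amax Bmax.
move: Ea Eb; rewrite (sort_ger_cons fr'); last first.
  by move: Amax; rewrite (perm_all _ fr') => /andP[].
rewrite (sort_ger_cons sr'); last by move: Bmax; rewrite (perm_all _ sr') => /andP[].
move=> [<-] [<-] size_r; rewrite /= big_cons; apply: le_trans le_r' _.
rewrite lerD2l; apply: IH; move: size_r; rewrite -(size_map fst) (perm_size fr').
by rewrite /= size_map.
Qed.

Lemma sum_mul_le_sort n (f g : 'I_n -> R) :
  \sum_j f j * g j <=
  \sum_(i < n) nth 0 (sort ger [seq f j | j <- enum 'I_n]) i *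
               nth 0 (sort ger [seq g j | j <- enum 'I_n]) i.
Proof.
set r := [seq (f j, g j) | j <- enum 'I_n].
have -> : \sum_j f j * g j = \sum_(p <- r) p.1 * p.2 by rewrite big_map big_enum.
have [<- <-] : map fst r = map f (enum 'I_n) /\ map snd r = map g (enum 'I_n).
  by rewrite -!map_comp.
apply: le_trans (sum_mul_le_zip_sort r) _.
rewrite (big_nth 0) size_zip !size_sort !size_map -enumT size_enum_ord minnn big_mkord.
by under eq_bigr => i _ do rewrite nth_zip ?size_sort ?size_map ?size_enum_ord //.
Qed.

Lemma perm_indicator (T : Type) (P : pred T) (s : seq T) :
  perm_eq [seq (P x)%:R : R | x <- s]
          (nseq (count P s) 1 ++ nseq (size s - count P s) 0).
Proof.
elim: s => //= x s IH; case: (P x) => /=; first by rewrite add1n subSS perm_cons.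
rewrite add0n subSn ?count_size // perm_sym (perm_catCA (nseq _ 1) [:: 0]) /=.
by rewrite perm_cons perm_sym.
Qed.

Lemma sorted_ger_nseq_cat k m : sorted ger (nseq k 1 ++ nseq m 0).
Proof.
have zeros : sorted ger (nseq m 0) by elim: m => [|[|m] IH] //=; rewrite lexx.
rewrite cat_nseq; elim: k => [|[|k] IH] //=; last by rewrite lexx.
by case: m zeros {IH} => //= m ->; rewrite ler01.
Qed.

Lemma sort_indicator (T : Type) (P : pred T) (s : seq T) :
  sort ger [seq (P x)%:R : R | x <- s] =
  nseq (count P s) 1 ++ nseq (size s - count P s) 0.
Proof.
apply: (sorted_eq ger_trans ger_anti); first exact: (sort_sorted ger_total).
  exact: sorted_ger_nseq_cat.
by rewrite perm_sort; exact: perm_indicator.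
Qed.

End rearrangement.

Section vectors.
Variable R : realType.

Lemma dotvE n (a b : 'cV[R]_n) : dotv a b = (a^T *m b) 0 0.
Proof. by rewrite /dotv mxE; apply: eq_bigr => i _; rewrite mxE. Qed.

Lemma dotv_mulmx d n (D : 'M[R]_(d, n)) (g : 'cV[R]_d) (x : 'cV[R]_n) :
  dotv g (D *m x) = dotv (D^T *m g) x.
Proof. by rewrite !dotvE trmx_mul trmxK mulmxA. Qed.

Lemma dotvDl n (a b u : 'cV[R]_n) : dotv (a + b) u = dotv a u + dotv b u.
Proof. by rewrite /dotv -big_split; apply: eq_bigr => i _; rewrite mxE mulrDl. Qed.

Lemma sqr_l2norm n (x : 'cV[R]_n) : l2norm x ^+ 2 = \sum_i x i 0 ^+ 2.
Proof. by rewrite sqr_sqrtr // sumr_ge0 // => i _; exact: sqr_ge0. Qed.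

Lemma l2norm_eq0 n (x : 'cV[R]_n) : l2norm x = 0 -> x = 0.
Proof.
move=> x0; have sum0 : \sum_i x i 0 ^+ 2 = 0 by rewrite -sqr_l2norm x0 expr0n.
apply/matrixP => i j; rewrite (ord1 j) mxE; apply/eqP; rewrite -sqrf_eq0; apply/eqP.
by apply: (psumr_eq0P _ sum0) => // k _; exact: sqr_ge0.
Qed.

Lemma dotv_le_l2norm n (w u : 'cV[R]_n) : dotv w u <= l2norm w * l2norm u.
Proof.
set c := l2norm w; set e := l2norm u.
have ce_ge0 : 0 <= c * e by rewrite mulr_ge0 ?sqrtr_ge0.
have [/eqP|ce0] := eqVneq (c * e) 0.
  rewrite mulf_eq0 => /orP[]/eqP/l2norm_eq0->;
  by rewrite dotvE ?trmx0 ?mul0mx ?mulmx0 !mxE.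
have ce_gt0 : 0 < c * e by rewrite lt_def ce0.
(* Expanding [0 <= sum_i (e w_i - c u_i)^2] gives [2 c e <w, u> <= 2 c^2 e^2]. *)
have : 0 <= \sum_i (e * w i 0 - c * u i 0) ^+ 2 by apply: sumr_ge0 => i _; exact: sqr_ge0.
have -> : \sum_i (e * w i 0 - c * u i 0) ^+ 2 =
    e ^+ 2 * \sum_i w i 0 ^+ 2 - (2 * e * c) * dotv w u + c ^+ 2 * \sum_i u i 0 ^+ 2.
  rewrite /dotv !mulr_sumr -sumrB -big_split /=.
  by apply: eq_bigr => i _; ring.
by rewrite -!sqr_l2norm -/c -/e; nra.
Qed.

End vectors.

Section rearrangement_of_vectors.
Variables (R : realType) (n : nat).
Local Notation ger := (fun a b : R => b <= a).
Local Notation sorted_abs x := (sort ger [seq `|x j 0| | j <- enum 'I_n]).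

Lemma rearrE (x : 'cV[R]_n) i : rearr x i 0 = nth 0 (sorted_abs x) i.
Proof. by rewrite mxE. Qed.

Lemma rearr_ge0 (x : 'cV[R]_n) i : 0 <= rearr x i 0.
Proof.
rewrite rearrE; have : nth 0 (sorted_abs x) i \in sorted_abs x.
  by rewrite mem_nth // size_sort size_map size_enum_ord.
by rewrite mem_sort => /mapP[j _ ->].
Qed.

Lemma sum_rearr (F : R -> R) (x : 'cV[R]_n) :
  \sum_i F (rearr x i 0) = \sum_j F `|x j 0|.
Proof.
transitivity (\sum_(y <- sorted_abs x) F y).
  rewrite (big_nth 0) size_sort size_map size_enum_ord big_mkord.
  by apply: eq_bigr => i _; rewrite rearrE.
by rewrite (perm_big _ (permEl (perm_sort _ _))) big_map big_enum.
Qed.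

Lemma l2norm_rearr (x : 'cV[R]_n) : l2norm (rearr x) = l2norm x.
Proof.
rewrite /l2norm (sum_rearr (fun y => y ^+ 2)); congr Num.sqrt.
by apply: eq_bigr => j _; rewrite real_normK ?num_real.
Qed.

Lemma dotv_le_rearr (a x : 'cV[R]_n) : dotv a x <= dotv (rearr a) (rearr x).
Proof.
apply: (@le_trans _ _ (\sum_j `|a j 0| * `|x j 0|)).
  by apply: ler_sum => j _; rewrite -normrM ler_norm.
apply: le_trans (sum_mul_le_sort (fun j => `|a j 0|) (fun j => `|x j 0|)) _.
by rewrite /dotv; under [leRHS]eq_bigr do rewrite !rearrE.
Qed.

Lemma l1norm_restr_le_rearr (T : {set 'I_n}) s (x : 'cV[R]_n) :
  (#|T| <= s)%N -> l1norm (restr T x) <= \sum_(i < n | (i < s)%N) rearr x i 0.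
Proof.
move=> card_T.
have -> : l1norm (restr T x) = \sum_j `|x j 0| * (j \in T)%:R.
  by apply: eq_bigr => j _; rewrite mxE; case: (j \in T); rewrite ?mulr1 ?mulr0 ?normr0.
apply: le_trans (sum_mul_le_sort _ (fun j => (j \in T)%:R)) _; rewrite sort_indicator.
have -> : count (fun j => j \in T) (enum 'I_n) = #|T|.
  by rewrite cardE -size_filter enumT.
rewrite size_enum_ord [leRHS]big_mkcond /=.
apply: ler_sum => i _; rewrite -rearrE nth_cat size_nseq !nth_nseq.
case: (ltnP i #|T|) => iT; first by rewrite mulr1 (leq_trans iT card_T).
by rewrite if_same mulr0; case: ifP => _; rewrite ?rearr_ge0.
Qed.

Lemma sum_rearr_restr (T : {set 'I_n}) (x : 'cV[R]_n) :
  \sum_i rearr x i 0 = l1norm (restr T x) + l1norm (restr (~: T) x).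
Proof.
rewrite (sum_rearr id) /l1norm -big_split; apply: eq_bigr => j _ /=.
by rewrite !mxE finset.in_setC; case: (j \in T); rewrite normr0 ?addr0 ?add0r.
Qed.

Lemma K_cone_rearr s (gamma : R) (x : 'cV[R]_n) :
  0 <= gamma ->
  (exists T : {set 'I_n}, (#|T| <= s)%N /\
     gamma * l1norm (restr (~: T) x) <= l1norm (restr T x)) ->
  K_cone s gamma (rearr x).
Proof.
move=> gamma_ge0 [T [card_T cone_T]]; split=> [i|]; first exact: rearr_ge0.
have head_le := l1norm_restr_le_rearr x card_T.
have := sum_rearr_restr T x; rewrite (bigID (fun i : 'I_n => (i < s)%N)) /=.
under [X in _ + X = _]eq_bigl do rewrite -leqNgt.
set head := \sum_(i < n | (i < s)%N) _ in head_le *.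
set tail := \sum_(i < n | (s <= i)%N) _.
move=> sum_eq; have tail_le : tail <= l1norm (restr (~: T) x) by lra.
have := ler_wpM2l gamma_ge0 tail_le; lra.
Qed.

End rearrangement_of_vectors.

Lemma S_gamma_dotv_le (R : realType) n s (gamma : R) (a x z : 'cV[R]_n) :
  0 <= gamma -> S_gamma s gamma x -> dual_cone (K_cone s gamma) z ->
  dotv a x <= l2norm (rearr a + z).
Proof.
move=> gamma_ge0 [x1 cone_x] z_dual; apply: le_trans (dotv_le_rearr a x) _.
apply: (@le_trans _ _ (dotv (rearr a + z) (rearr x))).
  by rewrite dotvDl lerDl; apply: z_dual; exact: K_cone_rearr.
by apply: le_trans (dotv_le_l2norm _ _) _; rewrite l2norm_rearr x1 mulr1.
Qed.

Theorem lemma4p5 (R : realType) (d n s : nat) (D : 'M[R]_(d, n)) (gamma : R) :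
  (1 <= s <= n)%N -> 0 < gamma ->
  (gwidth [set D *m x | x in S_gamma s gamma] <=
   gauss_exp (fun g : 'cV[R]_d =>
     ereal_inf [set (l2norm (rearr (D^T *m g) + z))%:E
               | z in dual_cone (K_cone s gamma)]))%E.
Proof.
move=> _ gamma_gt0; apply: le_gauss_exp => g.
apply: ge_ereal_sup => _ [_ [x Sx <-] <-].
apply: le_ereal_inf_tmp => _ [z z_dual <-].
by rewrite lee_fin dotv_mulmx (S_gamma_dotv_le _ (ltW gamma_gt0) Sx z_dual).
Qed.
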